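(* For every expansive homeomorphism $f$ of a compact metrizable space $X$ there is a metric $\mathrm{d}$ on $X$ defining its topology such that $f$ is a bi-Lipschitz homeomorphism of $(X,\mathrm{d})$ and $f$ is $\mathrm{d}_W$-robustly expansive, i.e. there are $\epsilon,\delta>0$ such that every bi-Lipschitz homeomorphism $g$ of $(X,\mathrm{d})$ with $\mathrm{d}_W(f,g)<\epsilon$ is expansive with expansive constant $\delta$.
   Context: A homeomorphism $g$ of a compact metric space $(X,\mathrm{d})$ is expansive with expansive constant $\delta>0$ if $\mathrm{d}(g^n(x),g^n(y))\le\delta$ for all $n\in\mathbb Z$ implies $x=y$; $f$ is expansive if it is so for some metric defining the topology and some $\delta$. $\mathrm{d}_{C^0}(f,g)=\max_{x}\mathrm{d}(f(x),g(x))+\max_x\mathrm{d}(f^{-1}(x),g^{-1}(x))$; $\mathrm{d}'_W(f,g)=\sup_{x\ne y}\frac{|\mathrm{d}(f(x),f(y))-\mathrm{d}(g(x),g(y))|}{\mathrm{d}(x,y)}$; $\mathrm{d}_W(f,g)=\mathrm{d}_{C^0}(f,g)+\mathrm{d}'_W(f,g)+\mathrm{d}'_W(f^{-1},g^{-1})$ for bi-Lipschitz homeomorphisms $f,g$. *)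

From Stdlib Require Import Reals Lra ZArith List.
Open Scope R_scope.

Definition is_metric {X : Type} (d : X -> X -> R) : Prop :=
  (forall x y, 0 <= d x y) /\
  (forall x y, d x y = 0 <-> x = y) /\
  (forall x y, d x y = d y x) /\
  (forall x y z, d x z <= d x y + d y z).

Definition metric_open {X : Type} (d : X -> X -> R) (U : X -> Prop) : Prop :=
  forall x, U x -> exists r, 0 < r /\ forall y, d x y < r -> U y.

(** A topology on X is given by its family of open sets [T].
    [d] defines the topology [T]. *)
Definition metric_defines {X : Type} (T : (X -> Prop) -> Prop)
  (d : X -> X -> R) : Prop :=
  is_metric d /\ forall U, T U <-> metric_open d U.

Definition metrizable {X : Type} (T : (X -> Prop) -> Prop) : Prop :=
  exists d, metric_defines T d.

Definition compact_space {X : Type} (T : (X -> Prop) -> Prop) : Prop :=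
  forall (I : Type) (U : I -> X -> Prop),
    (forall i, T (U i)) -> (forall x, exists i, U i x) ->
    exists l : list I, forall x, exists i, In i l /\ U i x.

Definition continuous_map {X : Type} (T : (X -> Prop) -> Prop) (f : X -> X) : Prop :=
  forall U, T U -> T (fun x => U (f x)).

Definition homeomorphism {X : Type} (T : (X -> Prop) -> Prop) (f fi : X -> X) : Prop :=
  (forall x, fi (f x) = x) /\ (forall x, f (fi x) = x) /\
  continuous_map T f /\ continuous_map T fi.

Definition iterZ {X : Type} (f fi : X -> X) (n : Z) (x : X) : X :=
  match n with
  | Z0 => x
  | Zpos p => Nat.iter (Pos.to_nat p) f x
  | Zneg p => Nat.iter (Pos.to_nat p) fi x
  end.

Definition expansive_const {X : Type} (d : X -> X -> R) (g gi : X -> X) (delta : R) : Prop :=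
  0 < delta /\
  forall x y, (forall n : Z, d (iterZ g gi n x) (iterZ g gi n y) <= delta) -> x = y.

Definition expansive {X : Type} (T : (X -> Prop) -> Prop) (f fi : X -> X) : Prop :=
  exists d delta, metric_defines T d /\ expansive_const d f fi delta.

Definition lipschitz {X : Type} (d : X -> X -> R) (f : X -> X) : Prop :=
  exists L, forall x y, d (f x) (f y) <= L * d x y.

Definition bilipschitz_homeo {X : Type} (d : X -> X -> R) (f fi : X -> X) : Prop :=
  (forall x, fi (f x) = x) /\ (forall x, f (fi x) = x) /\
  lipschitz d f /\ lipschitz d fi.

(** Supremum of a set of nonnegative reals, with convention sup(empty) = 0 *)
Definition sup_nonneg (P : R -> Prop) (r : R) : Prop :=
  is_lub (fun v => v = 0 \/ P v) r.

Definition dC0 {X : Type} (d : X -> X -> R) (f fi g gi : X -> X) (r : R) : Prop :=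
  exists a b,
    sup_nonneg (fun v => exists x, v = d (f x) (g x)) a /\
    sup_nonneg (fun v => exists x, v = d (fi x) (gi x)) b /\
    r = a + b.

Definition dW' {X : Type} (d : X -> X -> R) (f g : X -> X) (r : R) : Prop :=
  sup_nonneg (fun v => exists x y, x <> y /\
     v = Rabs (d (f x) (f y) - d (g x) (g y)) / d x y) r.

Definition dW {X : Type} (d : X -> X -> R) (f fi g gi : X -> X) (r : R) : Prop :=
  exists c a b, dC0 d f fi g gi c /\ dW' d f g a /\ dW' d fi gi b /\ r = c + a + b.

(* Let d be a metric with expansive constant delta. By compactness there is N such that
   orbits that are delta-close for |j| <= N start delta/3-close. Measure the separation of
   x and y by rho x y = 2^-m, m the least level at which their orbits drift more than
   delta/3 apart within time m N. Then f and f^-1 are 2-Lipschitz for rho, rho satisfies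
   rho x w <= 2 max (rho x y, rho y z, rho z w), and small rho-distances grow by a factor
   8 within 3N steps forwards or backwards. Frink's chain construction turns rho into a
   metric D with rho/2 <= D <= rho, and Mather's adapted metric
   max_(i <= M) max (D(f^i x, f^i y), D(f^-i x, f^-i y)) / k^i, with k^M = 4, expands
   small distances by k in a single step, forwards or backwards. Such one-step expansion
   survives perturbations g with d'_W(f,g) and d'_W(f^-1,g^-1) below (k-1)/2, and a
   two-sided sequence that is bounded yet beaten by a factor > 1 by a neighbour at every
   index must vanish; hence delta-shadowing g-orbits coincide. *)

From Stdlib Require Import Reals ZArith List Lra Lia Classical ClassicalEpsilon.
Open Scope R_scope.

Section IntegerIterates.
Context {X : Type} (h hi : X -> X).

Lemma iterZ_of_nat (k : nat) x : iterZ h hi (Z.of_nat k) x = Nat.iter k h x.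
Proof. destruct k; [reflexivity|]. simpl. now rewrite SuccNat2Pos.id_succ. Qed.

Lemma iterZ_opp_of_nat (k : nat) x : iterZ h hi (- Z.of_nat k) x = Nat.iter k hi x.
Proof. destruct k; [reflexivity|]. simpl. now rewrite SuccNat2Pos.id_succ. Qed.

Lemma Z_of_nat_or_opp (n : Z) : exists k : nat, n = Z.of_nat k \/ n = (- Z.of_nat k)%Z.
Proof. exists (Z.abs_nat n). rewrite Nat2Z.inj_abs_nat. lia. Qed.

Hypotheses (h_K : forall x, hi (h x) = x) (hi_K : forall x, h (hi x) = x).

Lemma iterZ_succ n x : iterZ h hi (n + 1) x = h (iterZ h hi n x).
Proof.
  destruct (Z_of_nat_or_opp n) as [[|k] [-> | ->]]; try reflexivity.
  - replace (Z.of_nat (S k) + 1)%Z with (Z.of_nat (S (S k))) by lia.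
    now rewrite !iterZ_of_nat.
  - replace (- Z.of_nat (S k) + 1)%Z with (- Z.of_nat k)%Z by lia.
    rewrite !iterZ_opp_of_nat. simpl. now rewrite hi_K.
Qed.

Lemma iterZ_pred n x : iterZ h hi (n - 1) x = hi (iterZ h hi n x).
Proof.
  replace n with ((n - 1) + 1)%Z at 2 by lia.
  now rewrite iterZ_succ, h_K.
Qed.

Lemma iterZ_add i j x : iterZ h hi (i + j) x = iterZ h hi i (iterZ h hi j x).
Proof.
  induction i using Z.peano_ind; [reflexivity| |].
  - replace (Z.succ i + j)%Z with ((i + j) + 1)%Z by lia.
    unfold Z.succ. now rewrite !iterZ_succ, IHi.
  - replace (Z.pred i + j)%Z with ((i + j) - 1)%Z by lia.
    rewrite <- Z.sub_1_r, !iterZ_pred. now rewrite IHi.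
Qed.

End IntegerIterates.

Definition lub (E : R -> Prop) : R := epsilon (inhabits 0) (is_lub E).

Lemma lub_spec (E : R -> Prop) : bound E -> (exists x, E x) -> is_lub E (lub E).
Proof.
  intros Hb Hn. unfold lub. apply epsilon_spec.
  destruct (completeness E Hb Hn) as [m Hm]. now exists m.
Qed.

Lemma half_pow_bounds k : 0 < (1/2)^k <= 1.
Proof. induction k; simpl; lra. Qed.

Lemma half_pow_antitone i j : (i <= j)%nat -> (1/2)^j <= (1/2)^i.
Proof. induction 1; [lra|]. simpl. pose proof (half_pow_bounds m). lra. Qed.

Fixpoint max_upto (w : nat -> R) (n : nat) : R :=
  match n with
  | O => w O
  | S n' => Rmax (max_upto w n') (w (S n'))
  end.

Lemma max_upto_ge (w : nat -> R) n i : (i <= n)%nat -> w i <= max_upto w n.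
Proof.
  induction n; intros Hi; simpl.
  - replace i with 0%nat by lia. lra.
  - destruct (Nat.eq_dec i (S n)) as [->|Hne]; [apply Rmax_r|].
    eapply Rle_trans; [apply IHn; lia| apply Rmax_l].
Qed.

Lemma max_upto_le (w : nat -> R) n b : (forall i, (i <= n)%nat -> w i <= b) -> max_upto w n <= b.
Proof.
  induction n; intros H; simpl; [apply H; lia|].
  apply Rmax_lub; [apply IHn; intros i Hi|]; apply H; lia.
Qed.

Lemma max_upto_attained (w : nat -> R) n : exists i, (i <= n)%nat /\ max_upto w n = w i.
Proof.
  induction n as [|n [i [Hi E]]]; simpl; [now exists 0%nat|].
  destruct (Rle_dec (max_upto w n) (w (S n))).
  - exists (S n). split; auto. now rewrite Rmax_right.
  - exists i. split; auto. rewrite Rmax_left; lra.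
Qed.

Lemma fold_Rmin_pos {A} (g : A -> R) (l : list A) :
  (forall i, 0 < g i) -> 0 < fold_right (fun i a => Rmin a (g i)) 1 l.
Proof. intros H. induction l; simpl; [lra|]. now apply Rmin_glb_lt. Qed.

Lemma fold_Rmin_le {A} (g : A -> R) (l : list A) i :
  In i l -> fold_right (fun i a => Rmin a (g i)) 1 l <= g i.
Proof.
  induction l as [|a l IH]; simpl; [tauto|]. intros [->|H]; [apply Rmin_r|].
  eapply Rle_trans; [apply Rmin_l| auto].
Qed.

Lemma fold_max_ge {A} (g : A -> nat) (l : list A) i :
  In i l -> (g i <= fold_right (fun i a => max a (g i)) 0 l)%nat.
Proof.
  induction l as [|a l IH]; simpl; [tauto|]. intros [->|H]; [lia|]. specialize (IH H). lia.
Qed.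
Section MetricFacts.
Context {X : Type} (d : X -> X -> R) (d_metric : is_metric d).

Lemma dist_nonneg x y : 0 <= d x y.
Proof. apply d_metric. Qed.

Lemma dist_xx x : d x x = 0.
Proof. now apply d_metric. Qed.

Lemma dist_sym x y : d x y = d y x.
Proof. apply d_metric. Qed.

Lemma dist_triangle x y z : d x z <= d x y + d y z.
Proof. apply d_metric. Qed.

Lemma dist_pos x y : x <> y -> 0 < d x y.
Proof.
  intros Hxy. destruct (dist_nonneg x y) as [|E]; auto.
  exfalso. apply Hxy, d_metric. now symmetry.
Qed.

Lemma dist_triangle3 a b c e : d a e <= d a b + d b c + d c e.
Proof. pose proof (dist_triangle a b e). pose proof (dist_triangle b c e). lra. Qed.

Lemma ball_open p r : metric_open d (fun z => d p z < r).
Proof.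
  intros z Hz. exists (r - d p z). split; [lra|].
  intros y Hy. pose proof (dist_triangle p z y). lra.
Qed.

End MetricFacts.

Definition finer {X} (A B : X -> X -> R) : Prop :=
  forall x eps, 0 < eps -> exists s, 0 < s /\ forall y, A x y < s -> B x y < eps.

Definition metric_continuous {X} (d : X -> X -> R) (h : X -> X) : Prop :=
  finer d (fun x y => d (h x) (h y)).

Lemma finer_open {X} (A B : X -> X -> R) U : finer A B -> metric_open B U -> metric_open A U.
Proof.
  intros HAB HU x Ux. destruct (HU x Ux) as [r [Hr Hy]].
  destruct (HAB x r Hr) as [s [Hs Hs']]. exists s. auto.
Qed.

Lemma finer_of_le {X} (A B : X -> X -> R) C :
  0 < C -> (forall x y, B x y <= C * A x y) -> finer A B.
Proof.
  intros HC H x eps He. exists (eps / C). split; [now apply Rdiv_lt_0_compat|].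
  intros y Hy. specialize (H x y). apply Rmult_lt_compat_l with (r := C) in Hy; auto.
  replace (C * (eps / C)) with eps in Hy by (field; lra). lra.
Qed.

Lemma metric_defines_finer {X} T (d d' : X -> X -> R) :
  metric_defines T d -> is_metric d' -> finer d d' -> finer d' d -> metric_defines T d'.
Proof.
  intros [_ HT] Hm' H1 H2. split; auto. intros U. rewrite HT.
  split; apply finer_open; auto.
Qed.

Lemma continuous_map_metric {X} T (d : X -> X -> R) h :
  metric_defines T d -> continuous_map T h -> metric_continuous d h.
Proof.
  intros [Hm HT] Hc x eta He.
  assert (Hb : T (fun z => d (h x) z < eta)) by (apply HT, ball_open, Hm).
  apply Hc, HT in Hb. destruct (Hb x) as [s [Hs Hz]].
  - now rewrite dist_xx.
  - exists s. auto.
Qed.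

Lemma metric_continuous_iter {X} (d : X -> X -> R) h k :
  metric_continuous d h -> metric_continuous d (Nat.iter k h).
Proof.
  intros Hc. induction k; intros x eta He; [exists eta; auto|].
  destruct (Hc (Nat.iter k h x) eta He) as [s1 [Hs1 H1]].
  destruct (IHk x s1 Hs1) as [s2 [Hs2 H2]]. exists s2. split; auto.
  intros z Hz. apply H1, H2, Hz.
Qed.

Lemma compact_cluster {X} T (d : X -> X -> R) (u : nat -> X) (F : R -> nat -> Prop) :
  metric_defines T d -> compact_space T ->
  (forall eps eps' n, eps <= eps' -> F eps n -> F eps' n) ->
  (forall eps, 0 < eps -> forall M, exists n, (M <= n)%nat /\ F eps n) ->
  exists q, forall eps, 0 < eps -> forall M,
    exists n, (M <= n)%nat /\ F eps n /\ d (u n) q < eps.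
Proof.
  intros [Hm HT] Hc HFmono HF. apply NNPP. intro Hno.
  set (I := (X * posreal * nat)%type).
  set (U := fun (i : I) (x : X) =>
    let '(c, r, M) := i in
    d c x < r /\ forall n, (M <= n)%nat -> ~ (F r n /\ d (u n) c < r)).
  destruct (Hc I U) as [l Hl].
  - intros [[c r] M]. apply HT. intros x [Hx HxM].
    destruct (ball_open d Hm c r x Hx) as [s [Hs Hy]].
    exists s. split; auto. intros y Hxy. split; auto.
  - intros x. apply NNPP; intro Hx. apply Hno. exists x. intros eps He M.
    apply NNPP; intro H. apply Hx. exists (x, mkposreal eps He, M). simpl. split.
    + now rewrite dist_xx.
    + intros n Hn Hlt. apply H. exists n. tauto.
  - set (Mx := fold_right (fun i a => max a (snd i)) 0%nat l).
    set (em := fold_right (fun (i : I) a => Rmin a (pos (snd (fst i)))) 1 l).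
    assert (Hem : 0 < em) by (apply fold_Rmin_pos; intros i; apply cond_pos).
    destruct (HF em Hem Mx) as [n [Hn HFn]].
    destruct (Hl (u n)) as [[[c r] M] [Hi [Hd1 Hd2]]].
    apply (Hd2 n).
    + apply Nat.le_trans with Mx; auto. apply (fold_max_ge (fun i : I => snd i) l _ Hi).
    + split; [|now rewrite dist_sym].
      apply (HFmono em); auto. apply (fold_Rmin_le (fun i : I => pos (snd (fst i))) l _ Hi).
Qed.

Definition close_upto {X} (d : X -> X -> R) (f fi : X -> X) (e : R) (m : Z) (x y : X) : Prop :=
  forall j : Z, (Z.abs j <= m)%Z -> d (iterZ f fi j x) (iterZ f fi j y) <= e.

Lemma close_upto_antitone {X} (d : X -> X -> R) f fi e m m' x y :
  (m <= m')%Z -> close_upto d f fi e m' x y -> close_upto d f fi e m x y.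
Proof. intros Hm H j Hj. apply H. lia. Qed.

Section UniformExpansivity.
Context {X : Type} (T : (X -> Prop) -> Prop) (d : X -> X -> R) (f fi : X -> X) (delta : R).
Hypotheses (d_defines : metric_defines T d) (T_compact : compact_space T)
  (f_homeo : homeomorphism T f fi) (f_expansive : expansive_const d f fi delta).

Let d_metric : is_metric d := proj1 d_defines.

Lemma iterZ_continuous j : metric_continuous d (iterZ f fi j).
Proof.
  destruct f_homeo as (_ & _ & Hcf & Hcfi).
  destruct (Z_of_nat_or_opp j) as [k [-> | ->]]; intros x eta He.
  - destruct (metric_continuous_iter d f k (continuous_map_metric T d f d_defines Hcf) x eta He)
      as [s [Hs H]].
    exists s. split; auto. intros z Hz. rewrite !iterZ_of_nat. auto.
  - destruct (metric_continuous_iter d fi k (continuous_map_metric T d fi d_defines Hcfi) x eta He)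
      as [s [Hs H]].
    exists s. split; auto. intros z Hz. rewrite !iterZ_opp_of_nat. auto.
Qed.

Lemma iterates_equicontinuous (m : nat) x eta : 0 < eta ->
  exists s, 0 < s /\ forall y, d x y < s -> close_upto d f fi eta (Z.of_nat m) x y.
Proof.
  intros He. induction m as [|m [s1 [Hs1 H1]]].
  - exists eta. split; [lra|]. intros y Hy j Hj. replace j with 0%Z by lia. simpl. lra.
  - destruct (iterZ_continuous (Z.of_nat (S m)) x eta He) as [s2 [Hs2 H2]].
    destruct (iterZ_continuous (- Z.of_nat (S m)) x eta He) as [s3 [Hs3 H3]].
    exists (Rmin s1 (Rmin s2 s3)). split; [repeat apply Rmin_glb_lt; auto|].
    intros y Hy j Hj.
    pose proof (Rmin_l s1 (Rmin s2 s3)). pose proof (Rmin_r s1 (Rmin s2 s3)).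
    pose proof (Rmin_l s2 s3). pose proof (Rmin_r s2 s3).
    destruct (Z.le_gt_cases (Z.abs j) (Z.of_nat m)) as [Hle|Hgt]; [apply H1; auto; lra|].
    assert (j = Z.of_nat (S m) \/ j = (- Z.of_nat (S m))%Z) as [-> | ->] by lia.
    + left. apply H2. lra.
    + left. apply H3. lra.
Qed.

(* Pairs that are [delta]-close up to ever larger times but stay [gamma]-apart
   accumulate at a pair [p <> q] whose whole orbits are [delta]-close. *)
Lemma uniform_expansivity gamma : 0 < gamma ->
  exists N : nat, forall u v, close_upto d f fi delta (Z.of_nat N) u v -> d u v <= gamma.
Proof.
  intros Hg. apply NNPP. intro Hno.
  assert (Hex : forall N : nat, exists uv : X * X,
    close_upto d f fi delta (Z.of_nat N) (fst uv) (snd uv) /\ gamma < d (fst uv) (snd uv)).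
  { intros N. apply NNPP; intro H. apply Hno. exists N. intros u v Huv.
    apply Rnot_lt_le. intro Hlt. apply H. now exists (u, v). }
  destruct (choice _ Hex) as [w Hw].
  set (u := fun n => fst (w n)). set (v := fun n => snd (w n)).
  destruct (compact_cluster T d u (fun _ _ => True) d_defines T_compact) as [p Hp]; auto.
  { intros eps _ M. now exists M. }
  destruct (compact_cluster T d v (fun eps n => d (u n) p < eps) d_defines T_compact) as [q Hpq].
  { intros eps eps' n. lra. }
  { intros eps He M. destruct (Hp eps He M) as [n [Hn [_ Hu]]]. now exists n. }
  assert (Hgap : gamma <= d p q).
  { apply Rnot_lt_le. intro Hlt.
    destruct (Hpq ((gamma - d p q) / 2) ltac:(lra) 0%nat) as [n [_ [H1 H2]]].
    pose proof (dist_triangle3 d d_metric (u n) p q (v n)).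
    rewrite (dist_sym d d_metric (v n) q) in H2. pose proof (proj2 (Hw n)). unfold u, v in *. lra. }
  enough (p = q) as <- by (rewrite (dist_xx d d_metric) in Hgap; lra).
  apply f_expansive. intros j. apply Rnot_lt_le. intro Hlt.
  set (eta := (d (iterZ f fi j p) (iterZ f fi j q) - delta) / 2).
  destruct (iterZ_continuous j p eta ltac:(unfold eta; lra)) as [s1 [Hs1 H1]].
  destruct (iterZ_continuous j q eta ltac:(unfold eta; lra)) as [s2 [Hs2 H2]].
  destruct (Hpq (Rmin s1 s2) ltac:(now apply Rmin_glb_lt) (Z.abs_nat j)) as [n [Hn [Hu Hv]]].
  pose proof (Rmin_l s1 s2). pose proof (Rmin_r s1 s2).
  rewrite (dist_sym d d_metric) in Hu, Hv.
  assert (A1 := H1 (u n) ltac:(lra)). assert (A2 := H2 (v n) ltac:(lra)).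
  assert (A3 : d (iterZ f fi j (u n)) (iterZ f fi j (v n)) <= delta).
  { apply (proj1 (Hw n)). rewrite <- Nat2Z.inj_abs_nat. lia. }
  pose proof (dist_triangle3 d d_metric (iterZ f fi j p) (iterZ f fi j (u n))
    (iterZ f fi j (v n)) (iterZ f fi j q)).
  rewrite (dist_sym d d_metric (iterZ f fi j q)) in A2. unfold eta in *. simpl in *. lra.
Qed.

End UniformExpansivity.

Lemma least_nat (P : nat -> Prop) n : P n -> exists m, P m /\ forall i, (i < m)%nat -> ~ P i.
Proof.
  revert P. induction n as [n IH] using lt_wf_ind. intros P Hn.
  destruct (classic (exists i, (i < n)%nat /\ P i)) as [[i [Hi Pi]]|Hno].
  - exact (IH i Hi P Pi).
  - exists n. split; auto. intros i Hi Pi. apply Hno. eauto.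
Qed.

Section SeparationQuasiMetric.
Context {X : Type} (d : X -> X -> R) (f fi : X -> X) (e : R) (N : nat).
Hypotheses (d_metric : is_metric d)
  (f_K : forall x, fi (f x) = x) (fi_K : forall x, f (fi x) = x)
  (f_expansive : expansive_const d f fi (3 * e))
  (N_controls : forall u v, close_upto d f fi (3 * e) (Z.of_nat N) u v -> d u v <= e).

Definition close_level (k : nat) (x y : X) : Prop :=
  close_upto d f fi e (Z.of_nat k * Z.of_nat N) x y.

(* [rho x y = 2^-m] for the least level [m] at which the orbits of [x] and [y] separate
   by more than [e] within time [m N], and [0] if they never do. *)
Definition rho (x y : X) : R :=
  lub (fun v => v = 0 \/ exists k, ~ close_level k x y /\ v = (1/2)^k).

Lemma rho_is_lub x y :
  is_lub (fun v => v = 0 \/ exists k, ~ close_level k x y /\ v = (1/2)^k) (rho x y).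
Proof.
  apply lub_spec; [|now exists 0; left].
  exists 1. intros v [->|[k [_ ->]]]; [lra|apply half_pow_bounds].
Qed.

Lemma rho_ge k x y : ~ close_level k x y -> (1/2)^k <= rho x y.
Proof. intros H. apply (proj1 (rho_is_lub x y)). right. eauto. Qed.

Lemma rho_le x y r : 0 <= r ->
  (forall k, ~ close_level k x y -> (1/2)^k <= r) -> rho x y <= r.
Proof. intros H0 H. apply (proj2 (rho_is_lub x y)). intros v [->|[k [Hk ->]]]; auto. Qed.

Lemma rho_nonneg x y : 0 <= rho x y.
Proof. apply (proj1 (rho_is_lub x y)). now left. Qed.

Lemma close_level_antitone k k' x y :
  (k <= k')%nat -> close_level k' x y -> close_level k x y.
Proof. intros Hk. apply close_upto_antitone. apply Z.mul_le_mono_nonneg_r; lia. Qed.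

Lemma close_level_of_rho_lt k x y : rho x y < (1/2)^k -> close_level k x y.
Proof. intros Hl. apply NNPP. intro Hn. apply rho_ge in Hn. lra. Qed.

Lemma rho_le_of_close_level k x y : close_level k x y -> rho x y <= (1/2)^(S k).
Proof.
  intros G. apply rho_le; [pose proof (half_pow_bounds (S k)); lra|].
  intros i Hi. apply half_pow_antitone. destruct (Nat.le_gt_cases i k); [|lia].
  exfalso. eauto using close_level_antitone.
Qed.

Lemma rho_eq_least m x y : ~ close_level m x y ->
  (forall i, (i < m)%nat -> close_level i x y) -> rho x y = (1/2)^m.
Proof.
  intros Hm Hlt. apply Rle_antisym; [|now apply rho_ge].
  apply rho_le; [pose proof (half_pow_bounds m); lra|].
  intros i Hi. apply half_pow_antitone. destruct (Nat.le_gt_cases m i); auto.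
  exfalso. eauto.
Qed.

Lemma rho_xx x : rho x x = 0.
Proof.
  apply Rle_antisym; [|apply rho_nonneg]. apply rho_le; [lra|].
  intros k Hk. exfalso. apply Hk. intros j _.
  rewrite (dist_xx d d_metric). pose proof (proj1 f_expansive). lra.
Qed.

Lemma rho_sym x y : rho x y = rho y x.
Proof.
  enough (H : forall a b, rho a b <= rho b a) by (apply Rle_antisym; auto).
  intros a b. apply rho_le; [apply rho_nonneg|]. intros k Hk. apply rho_ge.
  intro G. apply Hk. intros j Hj. rewrite (dist_sym d d_metric). now apply G.
Qed.

Lemma separated_at_some_level x y : (1 <= N)%nat -> x <> y -> exists k, ~ close_level k x y.
Proof.
  intros N_pos Hxy. pose proof (proj1 f_expansive).
  assert (exists j, 3 * e < d (iterZ f fi j x) (iterZ f fi j y)) as [j Hj].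
  { apply NNPP. intro Hn. apply Hxy, f_expansive. intros n.
    apply Rnot_lt_le. intro Hl. apply Hn. eauto. }
  exists (Z.abs_nat j). intro G.
  enough (d (iterZ f fi j x) (iterZ f fi j y) <= e) by lra.
  apply G. rewrite Nat2Z.inj_abs_nat. nia.
Qed.

Lemma rho_pos x y : (1 <= N)%nat -> x <> y -> 0 < rho x y.
Proof.
  intros N_pos Hxy. destruct (separated_at_some_level x y N_pos Hxy) as [k Hk].
  apply (Rlt_le_trans _ ((1/2)^k)); [apply half_pow_bounds| now apply rho_ge].
Qed.

Lemma close_level_three k x y z w :
  close_level (S k) x y -> close_level (S k) y z -> close_level (S k) z w ->
  close_level k x w.
Proof.
  unfold close_level, close_upto. rewrite Nat2Z.inj_succ.
  intros Gxy Gyz Gzw j Hj. apply N_controls. intros i Hi.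
  rewrite <- !iterZ_add by assumption.
  assert (Hij : (Z.abs (i + j) <= Z.succ (Z.of_nat k) * Z.of_nat N)%Z) by lia.
  pose proof (dist_triangle3 d d_metric (iterZ f fi (i + j) x) (iterZ f fi (i + j) y)
    (iterZ f fi (i + j) z) (iterZ f fi (i + j) w)).
  specialize (Gxy _ Hij). specialize (Gyz _ Hij). specialize (Gzw _ Hij). lra.
Qed.

Lemma rho_frink x y z w : rho x w <= 2 * Rmax (rho x y) (Rmax (rho y z) (rho z w)).
Proof.
  pose proof (Rmax_l (rho x y) (Rmax (rho y z) (rho z w))).
  pose proof (Rmax_r (rho x y) (Rmax (rho y z) (rho z w))).
  pose proof (Rmax_l (rho y z) (rho z w)). pose proof (Rmax_r (rho y z) (rho z w)).
  set (r := Rmax (rho x y) (Rmax (rho y z) (rho z w))) in *.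
  pose proof (rho_nonneg x y).
  apply rho_le; [lra|]. intros k Hk. apply Rnot_lt_le. intro Hlt.
  assert (Hs : r < (1/2)^(S k)) by (simpl; lra).
  apply Hk. apply (close_level_three k x y z w); apply close_level_of_rho_lt; lra.
Qed.

Lemma rho_shift_lipschitz s x y : (Z.abs s <= Z.of_nat N)%Z ->
  rho (iterZ f fi s x) (iterZ f fi s y) <= 2 * rho x y.
Proof.
  intros Hs. apply rho_le; [pose proof (rho_nonneg x y); lra|].
  intros k Hk.
  assert (H : ~ close_level (S k) x y).
  { intros G. apply Hk. intros j Hj. rewrite <- !iterZ_add by assumption. apply G.
    rewrite Nat2Z.inj_succ. lia. }
  apply rho_ge in H. simpl in H. lra.
Qed.

Lemma rho_ge_shift s j k x y :
  e < d (iterZ f fi j x) (iterZ f fi j y) -> (Z.abs (j - s) <= Z.of_nat k * Z.of_nat N)%Z ->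
  (1/2)^k <= rho (iterZ f fi s x) (iterZ f fi s y).
Proof.
  intros Hj Hjs. apply rho_ge. intro G. specialize (G (j - s)%Z Hjs).
  rewrite <- !iterZ_add in G by assumption. replace (j - s + s)%Z with j in G by lia. lra.
Qed.

(* The separation witnessed at level [m] happens at a time [j] with
   [(m-1) N < |j| <= m N]; shifting by [3 N] towards [j] brings it to level [m - 3]. *)
Lemma rho_expands x y : (1 <= N)%nat -> rho x y < (1/2)^3 ->
  8 * rho x y <= rho (iterZ f fi (Z.of_nat (3 * N)) x) (iterZ f fi (Z.of_nat (3 * N)) y) \/
  8 * rho x y <= rho (iterZ f fi (- Z.of_nat (3 * N)) x) (iterZ f fi (- Z.of_nat (3 * N)) y).
Proof.
  intros N_pos Hsmall. destruct (classic (x = y)) as [<-|Hxy].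
  { rewrite rho_xx, Rmult_0_r. left. apply rho_nonneg. }
  destruct (separated_at_some_level x y N_pos Hxy) as [k0 Hk0].
  destruct (least_nat (fun k => ~ close_level k x y) k0 Hk0) as [m [Hm Hlt]].
  assert (Hrho : rho x y = (1/2)^m).
  { apply rho_eq_least; auto. intros i Hi. apply NNPP. now apply Hlt. }
  assert (Hm4 : (4 <= m)%nat).
  { destruct (Nat.le_gt_cases 4 m); auto.
    pose proof (half_pow_antitone m 3 ltac:(lia)). lra. }
  assert (Gm1 : close_level (m - 1) x y) by (apply NNPP; apply Hlt; lia).
  assert (exists j, (Z.abs j <= Z.of_nat m * Z.of_nat N)%Z /\
    e < d (iterZ f fi j x) (iterZ f fi j y)) as [j [Hj1 Hj2]].
  { apply NNPP; intro Hn. apply Hm. intros j Hj. apply Rnot_lt_le. intro Hl. apply Hn. eauto. }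
  assert (Hj3 : (Z.of_nat (m - 1) * Z.of_nat N < Z.abs j)%Z).
  { apply Z.nle_gt. intro Hle. specialize (Gm1 j Hle). lra. }
  assert (Hpow : 8 * rho x y = (1/2)^(m - 3)).
  { rewrite Hrho. replace m with ((m - 3) + 3)%nat at 1 by lia. rewrite pow_add. simpl. lra. }
  rewrite Hpow. rewrite Nat2Z.inj_sub in Hj3 by lia.
  destruct (Z.le_gt_cases 0 j); [left|right]; apply (rho_ge_shift _ j); auto;
    rewrite !Nat2Z.inj_sub, !Nat2Z.inj_mul by lia; simpl Z.of_nat; nia.
Qed.

End SeparationQuasiMetric.

Section ChainMetric.
Context {X : Type} (r : X -> X -> R).
Hypotheses (r_nonneg : forall x y, 0 <= r x y) (r_xx : forall x, r x x = 0)
  (r_sym : forall x y, r x y = r y x)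
  (r_frink : forall x y z w, r x w <= 2 * Rmax (r x y) (Rmax (r y z) (r z w))).

Fixpoint chain_end (x : X) (Q : list X) : X :=
  match Q with
  | nil => x
  | z :: Q' => chain_end z Q'
  end.

Fixpoint chain_length (x : X) (Q : list X) : R :=
  match Q with
  | nil => 0
  | z :: Q' => r x z + chain_length z Q'
  end.

Definition chain_dist (x y : X) : R :=
  - lub (fun v => exists Q, chain_end x Q = y /\ v = - chain_length x Q).

Lemma chain_end_app x Q1 Q2 : chain_end x (Q1 ++ Q2) = chain_end (chain_end x Q1) Q2.
Proof. revert x; induction Q1; intros x; simpl; auto. Qed.

Lemma chain_length_app x Q1 Q2 :
  chain_length x (Q1 ++ Q2) = chain_length x Q1 + chain_length (chain_end x Q1) Q2.
Proof. revert x; induction Q1; intros x; simpl; [lra|]. rewrite IHQ1. lra. Qed.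

Lemma chain_length_nonneg x Q : 0 <= chain_length x Q.
Proof. revert x; induction Q as [|a Q IH]; intros x; simpl; [lra|]. specialize (IH a). pose proof (r_nonneg x a). lra. Qed.

Lemma chain_split x Q t : Q <> nil -> 0 <= t -> t <= chain_length x Q ->
  exists Q1 z Q2, Q = Q1 ++ z :: Q2 /\ chain_length x Q1 <= t /\
    chain_length z Q2 <= chain_length x Q - t.
Proof.
  revert x t. induction Q as [|a Q IH]; intros x t Hne Ht Htle; [congruence|].
  simpl in Htle |- *. destruct (Rlt_le_dec t (r x a)) as [Hlt|Hle].
  - exists nil, a, Q. simpl. repeat split; lra.
  - destruct Q as [|b Q'].
    + exists nil, a, nil. simpl in *. repeat split; lra.
    + destruct (IH a (t - r x a) ltac:(congruence) ltac:(lra) ltac:(lra))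
        as [Q1 [z [Q2 [E [H1 H2]]]]].
      exists (a :: Q1), z, Q2. simpl in *. repeat split; [now rewrite E|lra|lra].
Qed.

(* Frink's lemma: cut the chain at a link [y z] around half its length; the two halves
   have length at most half, and the four-point inequality for [x, y, z, end] concludes. *)
Lemma r_le_chain_length Q : forall x, r x (chain_end x Q) <= 2 * chain_length x Q.
Proof.
  induction Q as [Q IH] using (well_founded_induction (Wf_nat.well_founded_ltof _ (@length X))).
  intros x. destruct Q as [|a Q']; [simpl; rewrite r_xx; lra|].
  set (S := chain_length x (a :: Q')).
  pose proof (chain_length_nonneg x (a :: Q')).
  destruct (chain_split x (a :: Q') (S / 2) ltac:(congruence) ltac:(unfold S; lra) ltac:(unfold S; lra))
    as [Q1 [z [Q2 [E [Hs1 Hs2]]]]].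
  fold S in Hs2.
  assert (HL1 : (length Q1 < length (a :: Q'))%nat) by (rewrite E, length_app; simpl; lia).
  assert (HL2 : (length Q2 < length (a :: Q'))%nat) by (rewrite E, length_app; simpl; lia).
  pose proof (IH Q1 HL1 x) as I1. pose proof (IH Q2 HL2 z) as I2.
  assert (Hsum : S = chain_length x Q1 + r (chain_end x Q1) z + chain_length z Q2).
  { unfold S. rewrite E, chain_length_app. simpl. lra. }
  rewrite E, chain_end_app. simpl.
  pose proof (r_frink x (chain_end x Q1) z (chain_end z Q2)).
  pose proof (chain_length_nonneg x Q1). pose proof (chain_length_nonneg z Q2).
  assert (Rmax (r x (chain_end x Q1)) (Rmax (r (chain_end x Q1) z) (r z (chain_end z Q2))) <= S)
    by (repeat apply Rmax_lub; lra).
  lra.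
Qed.

Lemma chain_dist_is_lub x y :
  is_lub (fun v => exists Q, chain_end x Q = y /\ v = - chain_length x Q) (- chain_dist x y).
Proof.
  unfold chain_dist. rewrite Ropp_involutive. apply lub_spec.
  - exists 0. intros v [Q [_ ->]]. pose proof (chain_length_nonneg x Q). lra.
  - exists (- chain_length x (y :: nil)). now exists (y :: nil).
Qed.

Lemma chain_dist_le x Q : chain_dist x (chain_end x Q) <= chain_length x Q.
Proof.
  enough (- chain_length x Q <= - chain_dist x (chain_end x Q)) by lra.
  apply (proj1 (chain_dist_is_lub x _)). now exists Q.
Qed.

Lemma chain_dist_ge x y b :
  (forall Q, chain_end x Q = y -> b <= chain_length x Q) -> b <= chain_dist x y.
Proof.
  intros H. enough (- chain_dist x y <= - b) by lra.
  apply (proj2 (chain_dist_is_lub x y)). intros v [Q [HQ ->]]. specialize (H Q HQ). lra.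
Qed.

Lemma chain_dist_nonneg x y : 0 <= chain_dist x y.
Proof. apply chain_dist_ge. intros Q _. apply chain_length_nonneg. Qed.

Lemma chain_dist_le_r x y : chain_dist x y <= r x y.
Proof. pose proof (chain_dist_le x (y :: nil)). simpl in *. lra. Qed.

Lemma r_le_2_chain_dist x y : r x y <= 2 * chain_dist x y.
Proof.
  enough (r x y / 2 <= chain_dist x y) by lra.
  apply chain_dist_ge. intros Q <-. pose proof (r_le_chain_length Q x). lra.
Qed.

Fixpoint chain_rev (x : X) (Q : list X) : list X :=
  match Q with
  | nil => nil
  | z :: Q' => chain_rev z Q' ++ x :: nil
  end.

Lemma chain_rev_spec Q x :
  chain_end (chain_end x Q) (chain_rev x Q) = x /\
  chain_length (chain_end x Q) (chain_rev x Q) = chain_length x Q.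
Proof.
  revert x. induction Q as [|z Q IH]; intros x; simpl; auto.
  destruct (IH z) as [E1 E2]. rewrite chain_end_app, chain_length_app, E1, E2. simpl.
  split; auto. rewrite r_sym. lra.
Qed.

Lemma chain_dist_sym x y : chain_dist x y = chain_dist y x.
Proof.
  enough (H : forall a b, chain_dist b a <= chain_dist a b) by (apply Rle_antisym; auto).
  intros a b. apply chain_dist_ge. intros Q <-. destruct (chain_rev_spec Q a) as [E1 E2].
  rewrite <- E2. rewrite <- E1 at 2. apply chain_dist_le.
Qed.

Lemma chain_dist_triangle x y z : chain_dist x z <= chain_dist x y + chain_dist y z.
Proof.
  enough (chain_dist x z - chain_dist x y <= chain_dist y z) by lra.
  apply chain_dist_ge. intros Q2 <-.
  enough (chain_dist x (chain_end y Q2) - chain_length y Q2 <= chain_dist x y) by lra.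
  apply chain_dist_ge. intros Q1 <-.
  pose proof (chain_dist_le x (Q1 ++ Q2)). rewrite chain_end_app, chain_length_app in *. lra.
Qed.

Lemma chain_dist_metric : (forall x y, r x y = 0 -> x = y) -> is_metric chain_dist.
Proof.
  intros r_sep. split; [|split; [|split]].
  - apply chain_dist_nonneg.
  - intros x y; split.
    + intros E. apply r_sep. pose proof (r_le_2_chain_dist x y). pose proof (r_nonneg x y). lra.
    + intros <-. apply Rle_antisym; [|apply chain_dist_nonneg].
      apply (chain_dist_le x nil).
  - apply chain_dist_sym.
  - apply chain_dist_triangle.
Qed.

Lemma chain_dist_lipschitz (h : X -> X) L : 0 < L ->
  (forall a b, r (h a) (h b) <= L * r a b) ->
  forall x y, chain_dist (h x) (h y) <= L * chain_dist x y.
Proof.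
  intros HL Hh x y.
  enough (chain_dist (h x) (h y) / L <= chain_dist x y) as H.
  { apply Rmult_le_compat_l with (r := L) in H; [|lra].
    replace (L * (chain_dist (h x) (h y) / L)) with (chain_dist (h x) (h y)) in H by (field; lra).
    exact H. }
  apply chain_dist_ge. intros Q HQ.
  assert (Hmap : forall x0, chain_end (h x0) (map h Q) = h (chain_end x0 Q) /\
      chain_length (h x0) (map h Q) <= L * chain_length x0 Q).
  { clear HQ. induction Q as [|a Q IH]; intros x0; simpl; [split; auto; lra|].
    destruct (IH a) as [I1 I2]. split; auto. specialize (Hh x0 a). lra. }
  destruct (Hmap x) as [E1 E2]. rewrite HQ in E1.
  pose proof (chain_dist_le (h x) (map h Q)) as Hle. rewrite E1 in Hle.
  apply Rmult_le_reg_l with L; [lra|].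
  replace (L * (chain_dist (h x) (h y) / L)) with (chain_dist (h x) (h y)) by (field; lra). lra.
Qed.

End ChainMetric.

Section AdaptedMetric.
Context {X : Type} (D : X -> X -> R) (f fi : X -> X) (L k c0 : R) (M : nat).
Hypotheses (D_metric : is_metric D)
  (f_lipschitz : forall x y, D (f x) (f y) <= L * D x y)
  (fi_lipschitz : forall x y, D (fi x) (fi y) <= L * D x y)
  (L_ge1 : 1 <= L) (k_gt1 : 1 < k) (M_pos : (1 <= M)%nat)
  (D_hyperbolic : forall x y, D x y < c0 ->
     k ^ M * D x y <= D (Nat.iter M f x) (Nat.iter M f y) \/
     k ^ M * D x y <= D (Nat.iter M fi x) (Nat.iter M fi y)).

Definition orbit_gap (i : nat) (x y : X) : R :=
  Rmax (D (Nat.iter i f x) (Nat.iter i f y)) (D (Nat.iter i fi x) (Nat.iter i fi y)).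

(* Mather's trick: averaging (here: maximising) over [M] steps with weights [k^-i]
   turns expansion by [k^M] after [M] steps into expansion by [k] after one step. *)
Definition adapted (x y : X) : R := max_upto (fun i => orbit_gap i x y / k ^ i) M.

Let k_pow_pos i : 0 < k ^ i.
Proof. apply pow_lt. lra. Qed.

Lemma orbit_gap_0 x y : orbit_gap 0 x y = D x y.
Proof. apply Rmax_left. simpl. lra. Qed.

Lemma orbit_gap_le i x y : orbit_gap i x y <= L ^ i * D x y.
Proof.
  unfold orbit_gap. apply Rmax_lub.
  - induction i; simpl; [lra|]. eapply Rle_trans; [apply f_lipschitz|].
    rewrite Rmult_assoc. apply Rmult_le_compat_l; lra.
  - induction i; simpl; [lra|]. eapply Rle_trans; [apply fi_lipschitz|].
    rewrite Rmult_assoc. apply Rmult_le_compat_l; lra.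
Qed.

Lemma adapted_ge_term j x y a : (j <= M)%nat -> a <= orbit_gap j x y -> a / k ^ j <= adapted x y.
Proof.
  intros Hj Ha. eapply Rle_trans; [|apply (max_upto_ge _ M j Hj)].
  apply Rmult_le_compat_r; [left; apply Rinv_0_lt_compat, k_pow_pos| exact Ha].
Qed.

Lemma adapted_ge x y : D x y <= adapted x y.
Proof.
  replace (D x y) with (D x y / k ^ 0) by (simpl; field).
  apply adapted_ge_term; [lia|]. now rewrite orbit_gap_0.
Qed.

Lemma adapted_le x y : adapted x y <= L ^ M * D x y.
Proof.
  apply max_upto_le. intros i Hi.
  pose proof (dist_nonneg D D_metric x y).
  assert (1 <= k ^ i) by (apply pow_R1_Rle; lra).
  assert (L ^ i <= L ^ M) by (apply Rle_pow; auto).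
  apply Rle_trans with (orbit_gap i x y).
  - unfold Rdiv. rewrite <- (Rmult_1_r (orbit_gap i x y)) at 2.
    apply Rmult_le_compat_l.
    + eapply Rle_trans; [apply (dist_nonneg D D_metric)| apply Rmax_l].
    + rewrite <- Rinv_1. apply Rinv_le_contravar; lra.
  - eapply Rle_trans; [apply orbit_gap_le|]. nra.
Qed.

Lemma adapted_metric : is_metric adapted.
Proof.
  split; [|split; [|split]].
  - intros x y. eapply Rle_trans; [apply (dist_nonneg D D_metric)| apply adapted_ge].
  - intros x y. split.
    + intros E. apply D_metric. apply Rle_antisym; [|apply (dist_nonneg D D_metric)].
      rewrite <- E. apply adapted_ge.
    + intros <-. apply Rle_antisym; [|eapply Rle_trans; [apply (dist_nonneg D D_metric)| apply adapted_ge]].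
      apply max_upto_le. intros i _. unfold orbit_gap. rewrite !(dist_xx D D_metric), Rmax_left; lra.
  - enough (H : forall x y, adapted x y <= adapted y x) by (intros; apply Rle_antisym; auto).
    intros x y. apply max_upto_le. intros i Hi. apply adapted_ge_term; auto.
    unfold orbit_gap. rewrite !(dist_sym D D_metric (Nat.iter i _ x)). lra.
  - intros x y z. apply max_upto_le. intros i Hi.
    pose proof (max_upto_ge (fun i => orbit_gap i x y / k ^ i) M i Hi).
    pose proof (max_upto_ge (fun i => orbit_gap i y z / k ^ i) M i Hi).
    simpl in *. fold (adapted x y) (adapted y z) in *.
    enough (orbit_gap i x z / k ^ i <= orbit_gap i x y / k ^ i + orbit_gap i y z / k ^ i) by lra.
    unfold Rdiv. rewrite <- Rmult_plus_distr_r.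
    apply Rmult_le_compat_r; [left; apply Rinv_0_lt_compat, k_pow_pos|].
    unfold orbit_gap. apply Rmax_lub.
    + eapply Rle_trans; [apply (dist_triangle D D_metric _ (Nat.iter i f y))|].
      apply Rplus_le_compat; apply Rmax_l.
    + eapply Rle_trans; [apply (dist_triangle D D_metric _ (Nat.iter i fi y))|].
      apply Rplus_le_compat; apply Rmax_r.
Qed.

Lemma adapted_defines T : metric_defines T D -> metric_defines T adapted.
Proof.
  intros HD. assert (0 < L ^ M) by (apply pow_lt; lra).
  apply (metric_defines_finer T D); auto using adapted_metric.
  - apply (finer_of_le _ _ (L ^ M)); auto using adapted_le.
  - apply (finer_of_le _ _ 1); [lra|]. intros x y. rewrite Rmult_1_l. apply adapted_ge.
Qed.

Lemma adapted_bilipschitz :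
  (forall x, fi (f x) = x) -> (forall x, f (fi x) = x) -> bilipschitz_homeo adapted f fi.
Proof.
  intros f_K fi_K. assert (0 < L ^ M) by (apply pow_lt; lra).
  split; [|split; [|split]]; auto; exists (L ^ M * L); intros x y;
    eapply Rle_trans; try apply adapted_le; rewrite Rmult_assoc;
    apply Rmult_le_compat_l; try lra; pose proof (adapted_ge x y).
  - eapply Rle_trans; [apply f_lipschitz| apply Rmult_le_compat_l; lra].
  - eapply Rle_trans; [apply fi_lipschitz| apply Rmult_le_compat_l; lra].
Qed.

Lemma orbit_gap_shift j x y :
  D (Nat.iter (S j) f x) (Nat.iter (S j) f y) <= orbit_gap j (f x) (f y) /\
  D (Nat.iter (S j) fi x) (Nat.iter (S j) fi y) <= orbit_gap j (fi x) (fi y).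
Proof. unfold orbit_gap. rewrite !Nat.iter_succ_r. split; [apply Rmax_l|apply Rmax_r]. Qed.

Lemma adapted_expands x y : adapted x y < c0 ->
  k * adapted x y <= adapted (f x) (f y) \/ k * adapted x y <= adapted (fi x) (fi y).
Proof.
  intros Hsmall.
  destruct (max_upto_attained (fun i => orbit_gap i x y / k ^ i) M) as [[|j] [Hj E]];
    fold (adapted x y) in E; rewrite E in Hsmall |- *.
  - rewrite orbit_gap_0 in Hsmall |- *. simpl in Hsmall |- *.
    replace (D x y / 1) with (D x y) in * by field.
    assert (EM : M = S (M - 1)) by lia.
    destruct (D_hyperbolic x y Hsmall) as [Hh|Hh]; rewrite EM in Hh;
      change (k ^ S (M - 1)) with (k * k ^ (M - 1)) in Hh;
      destruct (orbit_gap_shift (M - 1) x y) as [Hf Hfi]; [left|right];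
      replace (k * D x y) with (k * k ^ (M - 1) * D x y / k ^ (M - 1))
        by (field; apply Rgt_not_eq, k_pow_pos);
      apply adapted_ge_term; lia || lra.
  - set (a := D (Nat.iter (S j) f x) (Nat.iter (S j) f y)).
    set (b := D (Nat.iter (S j) fi x) (Nat.iter (S j) fi y)).
    destruct (orbit_gap_shift j x y) as [Hf Hfi]. fold a b in Hf, Hfi.
    replace (k * (orbit_gap (S j) x y / k ^ S j)) with (Rmax a b / k ^ j)
      by (unfold orbit_gap; fold a b; simpl; field; split; [apply Rgt_not_eq, k_pow_pos|lra]).
    destruct (Rle_dec b a); [left; rewrite Rmax_left by lra|right; rewrite Rmax_right by lra];
      apply adapted_ge_term; lia || lra.
Qed.

End AdaptedMetric.

(* A sequence indexed by [Z] that is bounded and where every term is beaten by a factor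
   [k > 1] by one of its neighbours must vanish: otherwise a term close to the supremum
   would have a neighbour above the supremum. *)
Lemma expanding_bounded_sequence_vanishes (A : Z -> R) c k : 1 < k ->
  (forall n, 0 <= A n <= c) -> (forall n, k * A n <= Rmax (A (n + 1)%Z) (A (n - 1)%Z)) ->
  forall n, A n = 0.
Proof.
  intros Hk Hbd Hexp.
  set (E := fun v => exists n, v = A n).
  assert (Hs : is_lub E (lub E)).
  { apply lub_spec; [exists c; intros v [n ->]; apply Hbd| now exists (A 0%Z), 0%Z]. }
  set (s := lub E) in *.
  assert (HA : forall n, A n <= s) by (intros n; apply (proj1 Hs); now exists n).
  enough (s <= 0) by (intros n; specialize (Hbd n); specialize (HA n); lra).
  apply Rnot_lt_le. intro Hpos.
  assert (exists n, s / k < A n) as [n Hn].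
  { apply NNPP; intro Hno.
    assert (s <= s / k).
    { apply (proj2 Hs). intros v [n ->]. apply Rnot_lt_le. intro Hl. apply Hno. eauto. }
    assert (s / k < s); [|lra].
    apply Rmult_lt_reg_r with k; [lra|]. replace (s / k * k) with s by (field; lra). nra. }
  specialize (Hexp n). pose proof (HA (n + 1)%Z). pose proof (HA (n - 1)%Z).
  assert (Rmax (A (n + 1)%Z) (A (n - 1)%Z) <= s) by (apply Rmax_lub; auto).
  apply Rmult_lt_compat_l with (r := k) in Hn; [|lra].
  replace (k * (s / k)) with s in Hn by (field; lra). lra.
Qed.

Lemma sup_nonneg_nonneg P r : sup_nonneg P r -> 0 <= r.
Proof. intros H. apply (proj1 H). now left. Qed.

Lemma dW'_lower_bound {X} (D : X -> X -> R) f g a x y : is_metric D ->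
  dW' D f g a -> x <> y -> D (f x) (f y) - a * D x y <= D (g x) (g y).
Proof.
  intros Hm Hw Hxy. pose proof (dist_pos D Hm x y Hxy) as Hp.
  assert (Hb : Rabs (D (f x) (f y) - D (g x) (g y)) / D x y <= a).
  { apply (proj1 Hw). right. now exists x, y. }
  apply Rmult_le_compat_r with (r := D x y) in Hb; [|lra].
  replace (Rabs (D (f x) (f y) - D (g x) (g y)) / D x y * D x y)
    with (Rabs (D (f x) (f y) - D (g x) (g y))) in Hb by (field; lra).
  pose proof (Rle_abs (D (f x) (f y) - D (g x) (g y))). lra.
Qed.

Lemma dW_lipschitz_parts {X} (D : X -> X -> R) f fi g gi r : dW D f fi g gi r ->
  exists a b, dW' D f g a /\ dW' D fi gi b /\ 0 <= a /\ 0 <= b /\ a + b <= r.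
Proof.
  intros [c [a [b [[a0 [b0 [Ha0 [Hb0 ->]]]] [Ha [Hb ->]]]]]].
  exists a, b.
  pose proof (sup_nonneg_nonneg _ _ Ha0). pose proof (sup_nonneg_nonneg _ _ Hb0).
  pose proof (sup_nonneg_nonneg _ _ Ha). pose proof (sup_nonneg_nonneg _ _ Hb).
  refine (conj Ha (conj Hb _)). repeat split; lra.
Qed.

Section RobustExpansivity.
Context {X : Type} (D : X -> X -> R) (f fi g gi : X -> X) (k c0 : R).
Hypotheses (D_metric : is_metric D)
  (f_hyperbolic : forall x y, D x y < c0 ->
     k * D x y <= D (f x) (f y) \/ k * D x y <= D (fi x) (fi y)).

Lemma perturbed_expansion a b x y :
  dW' D f g a -> dW' D fi gi b -> a <= (k - 1) / 2 -> b <= (k - 1) / 2 -> D x y < c0 ->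
  (k + 1) / 2 * D x y <= Rmax (D (g x) (g y)) (D (gi x) (gi y)).
Proof.
  intros Ha Hb Ha' Hb' Hxy. destruct (classic (x = y)) as [<-|Hne].
  - rewrite (dist_xx D D_metric), Rmult_0_r.
    eapply Rle_trans; [apply (dist_nonneg D D_metric)| apply Rmax_l].
  - pose proof (dist_nonneg D D_metric x y).
    destruct (f_hyperbolic x y Hxy) as [Hh|Hh].
    + pose proof (dW'_lower_bound D f g a x y D_metric Ha Hne).
      eapply Rle_trans; [|apply Rmax_l]. nra.
    + pose proof (dW'_lower_bound D fi gi b x y D_metric Hb Hne).
      eapply Rle_trans; [|apply Rmax_r]. nra.
Qed.

Lemma expansive_of_dW_close : bilipschitz_homeo D g gi ->
  (exists r, dW D f fi g gi r /\ r < (k - 1) / 2) -> 0 < c0 ->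
  expansive_const D g gi (c0 / 2).
Proof.
  intros (g_K & gi_K & _) [r [Hr Hrk]] Hc0.
  destruct (dW_lipschitz_parts D f fi g gi r Hr) as [a [b [Ha [Hb [Ha0 [Hb0 Hab]]]]]].
  split; [lra|]. intros x y Horbit.
  set (A := fun n => D (iterZ g gi n x) (iterZ g gi n y)).
  assert (HA0 : A 0%Z = 0).
  { apply (expanding_bounded_sequence_vanishes A (c0 / 2) ((k + 1) / 2)); [lra| |].
    - intros n. split; [apply (dist_nonneg D D_metric)| apply Horbit].
    - intros n. unfold A. rewrite !iterZ_succ, !iterZ_pred by assumption.
      apply (perturbed_expansion a b); auto; try lra. specialize (Horbit n). lra. }
  now apply D_metric.
Qed.

End RobustExpansivity.

Section ExpansiveHomeomorphism.
Context {X : Type} (T : (X -> Prop) -> Prop) (d : X -> X -> R) (f fi : X -> X) (delta : R) (N : nat).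
Hypotheses (d_defines : metric_defines T d) (T_compact : compact_space T)
  (f_homeo : homeomorphism T f fi) (f_expansive : expansive_const d f fi delta)
  (N_pos : (1 <= N)%nat)
  (N_controls : forall u v, close_upto d f fi delta (Z.of_nat N) u v -> d u v <= delta / 3).

Let d_metric : is_metric d := proj1 d_defines.
Let f_K : forall x, fi (f x) = x := proj1 f_homeo.
Let fi_K : forall x, f (fi x) = x := proj1 (proj2 f_homeo).

Let f_expansive3 : expansive_const d f fi (3 * (delta / 3)).
Proof. now replace (3 * (delta / 3)) with delta by field. Qed.

Let N_controls3 u v :
  close_upto d f fi (3 * (delta / 3)) (Z.of_nat N) u v -> d u v <= delta / 3.
Proof. replace (3 * (delta / 3)) with delta by field. apply N_controls. Qed.

Let rho_d := rho d f fi (delta / 3) N.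

Let rho_frink_d : forall x y z w, rho_d x w <= 2 * Rmax (rho_d x y) (Rmax (rho_d y z) (rho_d z w)).
Proof. exact (rho_frink d f fi (delta / 3) N d_metric f_K fi_K N_controls3). Qed.

Definition separation_metric : X -> X -> R := chain_dist rho_d.

Lemma rho_le_2_separation_metric x y : rho_d x y <= 2 * separation_metric x y.
Proof.
  apply r_le_2_chain_dist; [apply rho_nonneg| |exact rho_frink_d].
  exact (rho_xx d f fi (delta / 3) N d_metric f_expansive3).
Qed.

Lemma separation_metric_is_metric : is_metric separation_metric.
Proof.
  apply chain_dist_metric; [apply rho_nonneg| | |exact rho_frink_d|].
  - exact (rho_xx d f fi (delta / 3) N d_metric f_expansive3).
  - exact (rho_sym d f fi (delta / 3) N d_metric).
  - intros x y E. apply NNPP. intro Hxy.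
    pose proof (rho_pos d f fi (delta / 3) N f_expansive3 x y N_pos Hxy). unfold rho_d in E. lra.
Qed.

Lemma separation_metric_defines : metric_defines T separation_metric.
Proof.
  apply (metric_defines_finer T d); [exact d_defines| exact separation_metric_is_metric| |].
  - intros x eps Heps.
    destruct (pow_lt_1_zero (1/2) ltac:(rewrite Rabs_pos_eq; lra) eps Heps) as [k Hk].
    specialize (Hk k (le_n k)). rewrite Rabs_pos_eq in Hk by (left; apply half_pow_bounds).
    pose proof (proj1 f_expansive).
    destruct (iterates_equicontinuous T d f fi d_defines f_homeo (k * N) x (delta / 3)
      ltac:(lra)) as [s [Hs Hs']].
    exists s. split; auto. intros y Hy.
    assert (G : close_level d f fi (delta / 3) N k x y).
    { unfold close_level. rewrite <- Nat2Z.inj_mul. auto. }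
    apply rho_le_of_close_level in G.
    pose proof (chain_dist_le_r rho_d (rho_nonneg _ _ _ _ _) x y).
    pose proof (half_pow_antitone k (S k) ltac:(lia)). unfold separation_metric, rho_d in *. lra.
  - intros x eps Heps.
    destruct (uniform_expansivity T d f fi delta d_defines T_compact f_homeo f_expansive (eps / 2)
      ltac:(lra)) as [M HM].
    exists ((1/2)^M / 2). split; [pose proof (half_pow_bounds M); lra|].
    intros y Hy. pose proof (rho_le_2_separation_metric x y).
    assert (G : close_level d f fi (delta / 3) N M x y) by (apply close_level_of_rho_lt; fold rho_d; lra).
    enough (d x y <= eps / 2) by lra.
    apply HM. intros j Hj. pose proof (proj1 f_expansive).
    enough (d (iterZ f fi j x) (iterZ f fi j y) <= delta / 3) by lra.
    apply G. nia.
Qed.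

Lemma separation_metric_lipschitz :
  (forall x y, separation_metric (f x) (f y) <= 2 * separation_metric x y) /\
  (forall x y, separation_metric (fi x) (fi y) <= 2 * separation_metric x y).
Proof.
  assert (H : forall s, (Z.abs s <= 1)%Z -> forall x y,
    separation_metric (iterZ f fi s x) (iterZ f fi s y) <= 2 * separation_metric x y).
  { intros s Hs. apply chain_dist_lipschitz; [apply rho_nonneg|lra|].
    intros a b. apply rho_shift_lipschitz; auto. lia. }
  split; [apply (H 1%Z)| apply (H (-1)%Z)]; reflexivity.
Qed.

Lemma separation_metric_hyperbolic x y : separation_metric x y < (1/2)^4 ->
  4 * separation_metric x y <=
    separation_metric (Nat.iter (3 * N) f x) (Nat.iter (3 * N) f y) \/
  4 * separation_metric x y <=
    separation_metric (Nat.iter (3 * N) fi x) (Nat.iter (3 * N) fi y).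
Proof.
  intros Hsmall. rewrite <- !(iterZ_of_nat f fi), <- !(iterZ_opp_of_nat f fi).
  pose proof (rho_le_2_separation_metric x y).
  pose proof (chain_dist_le_r rho_d (rho_nonneg _ _ _ _ _) x y).
  assert (Hrho : rho_d x y < (1/2)^3) by (simpl in *; lra).
  destruct (rho_expands d f fi (delta / 3) N d_metric f_K fi_K f_expansive3 x y N_pos Hrho) as [Hh|Hh];
    [left|right]; fold rho_d in Hh;
    match type of Hh with _ <= rho_d ?a ?b => pose proof (rho_le_2_separation_metric a b) end;
    unfold separation_metric in *; lra.
Qed.

End ExpansiveHomeomorphism.

Lemma exists_root_gt1 (M : nat) (a : R) : (1 <= M)%nat -> 1 < a -> exists k, 1 < k /\ k ^ M = a.
Proof.
  intros HM Ha. assert (HMp : 0 < INR M) by (apply lt_0_INR; lia).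
  exists (Rpower a (/ INR M)). split.
  - rewrite <- (Rpower_O a) by lra. apply Rpower_lt; [lra|]. now apply Rinv_0_lt_compat.
  - rewrite <- Rpower_pow by (unfold Rpower; apply exp_pos).
    rewrite Rpower_mult, Rinv_l by lra. apply Rpower_1. lra.
Qed.

Theorem mainTheorem2 (X : Type) (T : (X -> Prop) -> Prop)
  (HTm : metrizable T) (HTc : compact_space T)
  (f fi : X -> X) (Hf : homeomorphism T f fi) (Hexp : expansive T f fi) :
  exists d : X -> X -> R,
    metric_defines T d /\
    bilipschitz_homeo d f fi /\
    exists eps delta : R, 0 < eps /\ 0 < delta /\
      forall g gi : X -> X,
        bilipschitz_homeo d g gi ->
        (exists r, dW d f fi g gi r /\ r < eps) ->
        expansive_const d g gi delta.
Proof.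
  destruct Hexp as [d [delta [Hd Hdelta]]]. pose proof (proj1 Hdelta).
  destruct (uniform_expansivity T d f fi delta Hd HTc Hf Hdelta (delta / 3)) as [N0 HN0]; [lra|].
  set (N := S N0). set (M := (3 * N)%nat).
  assert (HN : forall u v, close_upto d f fi delta (Z.of_nat N) u v -> d u v <= delta / 3).
  { intros u v Huv. apply HN0. eapply close_upto_antitone; [|exact Huv]. lia. }
  set (D := separation_metric d f fi delta N).
  pose proof (separation_metric_is_metric T d f fi delta N Hd Hf Hdelta ltac:(lia) HN) as HD.
  destruct (separation_metric_lipschitz T d f fi delta N Hf ltac:(lia)) as [Hlip Hlipi].
  destruct (exists_root_gt1 M 4) as [k [Hk HkM]]; [lia|lra|].
  assert (Hhyp : forall x y, D x y < (1/2)^4 ->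
    k ^ M * D x y <= D (Nat.iter M f x) (Nat.iter M f y) \/
    k ^ M * D x y <= D (Nat.iter M fi x) (Nat.iter M fi y)).
  { rewrite HkM. exact (separation_metric_hyperbolic T d f fi delta N Hd Hf Hdelta ltac:(lia) HN). }
  exists (adapted D f fi k M). split; [|split].
  - apply (adapted_defines D f fi 2); auto; [lra|lia|].
    exact (separation_metric_defines T d f fi delta N Hd HTc Hf Hdelta ltac:(lia) HN).
  - apply (adapted_bilipschitz D f fi 2); auto; [lra|lia|apply Hf..].
  - exists ((k - 1) / 2), ((1/2)^4 / 2). pose proof (half_pow_bounds 4).
    split; [lra|]. split; [lra|]. intros g gi Hg Hr.
    apply (expansive_of_dW_close _ f fi g gi k); auto.
    + apply adapted_metric; auto. lia.
    + apply adapted_expands; auto. lia.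
    + apply half_pow_bounds.
Qed.
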